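(* Let $\xi\in\Xi^*_{T1}$. Then there exist a distribution $\mu_1\in\Delta(\Pi_{T1})$ and a single plan $\pi_2\in\Pi_{T2}$ such that $\xi=f(\mu_1\otimes\delta_{\pi_2})$, where $\delta_{\pi_2}$ is the point mass at $\pi_2$; moreover $\xi[\varnothing,\sigma_{T2}]=1$ if $\pi_2\in\Pi_{T2}(\sigma_{T2})$ and $0$ otherwise. Symmetrically, for $\xi\in\Xi^*_{T2}$ there exist $\pi_1\in\Pi_{T1}$ and $\mu_2\in\Delta(\Pi_{T2})$ with $\xi=f(\delta_{\pi_1}\otimes\mu_2)$.
   Context: A finite extensive-form game is played on a tree; each internal node belongs to one of the players $T1,T2,O$ or to chance. The nodes of player $i$ are partitioned into information sets $\mathcal I_i$; all nodes of $I\in\mathcal I_i$ share the action set $A_I$. Perfect recall is assumed. The sequences of player $i$ are $\Sigma_i=\{(I,a):I\in\mathcal I_i,a\in A_I\}\cup\{\varnothing\}$. For an information set $I$ of player $i$, $\sigma(I)$ denotes the last pair $(I',a')$ of player $i$ on the root-to-$I$ path, or $\varnothing$ if $i$ does not act before $I$. Two information sets $I_i\in\mathcal I_i$, $I_j\in\mathcal I_j$ are connected ($I_i\rightleftharpoons I_j$) if there exist $v\in I_i$, $w\in I_j$ such that the root-to-$v$ path passes through $w$ or vice versa. A pair $(\sigma_i,\sigma_j)$ is relevant ($\sigma_i\bowtie\sigma_j$) if one of them is $\varnothing$ or $\sigma_i=(I_i,a_i)$, $\sigma_j=(I_j,a_j)$ with $I_i\rightleftharpoons I_j$; $\Sigma_{T1}\bowtie\Sigma_{T2}$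 is the set of relevant pairs. Similarly $\sigma_i\bowtie I_j$ if $\sigma_i=\varnothing$ or $\sigma_i=(I_i,a_i)$ with $I_i\rightleftharpoons I_j$. A reduced-normal-form plan of player $i$ chooses an action at every information set of $i$ that remains reachable given the plan's own choices; their set is $\Pi_i$. For $\sigma=(I,a)$, $\Pi_i(\sigma)$ is the set of plans prescribing all of $i$'s actions on the path to $I$ and playing $a$ at $I$; $\Pi_i(\varnothing)=\Pi_i$. For $\mu_1\in\Delta(\Pi_{T1}),\mu_2\in\Delta(\Pi_{T2})$, $\mu_1\otimes\mu_2$ is the product distribution $(\pi_1,\pi_2)\mapsto\mu_1(\pi_1)\mu_2(\pi_2)$. The map $f$ sends $\mu_T\in\Delta(\Pi_{T1}\times\Pi_{T2})$ to the vector $f(\mu_T)$ indexed by relevant pairs with $f(\mu_T)[\sigma_{T1},\sigma_{T2}]=\sum_{\pi_1\in\Pi_{T1}(\sigma_{T1}),\pi_2\in\Pi_{T2}(\sigma_{T2})}\mu_T(\pi_1,\pi_2)$. The von Stengel–Forges polytope $\mathcal V_T$ is the set of nonnegative vectors $\xi$ indexed by relevant pairs with: $\xi[\varnothing,\varnothing]=1$; $\sum_{a\in A_{I}}\xi[(I,a),\sigma_{T2}]=\xi[\sigma(I),\sigma_{T2}]$ for all $I\in\mathcal I_{T1}$, $\sigma_{T2}\in\Sigma_{T2}$ with $I\bowtie\sigma_{T2}$; $\sum_{b\in A_{J}}\xi[\sigma_{T1},(J,b)]=\xi[\sigma_{T1},\sigma(J)]$ for all $J\in\mathcal I_{T2}$,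 $\sigma_{T1}\in\Sigma_{T1}$ with $\sigma_{T1}\bowtie J$. The semi-randomized correlation plans are $\Xi^*_{T1}=\{\xi\in\mathcal V_T:\xi[\varnothing,\sigma_{T2}]\in\{0,1\}\ \forall\sigma_{T2}\in\Sigma_{T2}\}$ and $\Xi^*_{T2}=\{\xi\in\mathcal V_T:\xi[\sigma_{T1},\varnothing]\in\{0,1\}\ \forall\sigma_{T1}\in\Sigma_{T1}\}$. *)

From HB Require Import structures.
From mathcomp Require Import all_boot all_order all_algebra.
From mathcomp Require Import reals.
Set Implicit Arguments. Unset Strict Implicit. Unset Printing Implicit Defensive.
Import Order.TTheory GRing.Theory Num.Theory.
Local Open Scope ring_scope.

Inductive player := T1 | T2 | O | Chance.
Definition player_eqb (p q : player) :=
  match p, q with T1, T1 | T2, T2 | O, O | Chance, Chance => true | _, _ => false end.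
Lemma player_eqP : Equality.axiom player_eqb.
Proof. by case; case; constructor. Qed.
HB.instance Definition _ := hasDecEq.Build player player_eqP.

(** A finite game tree.  [par v] is the parent of [v] ([None] for the root),
    [act v] is the action labelling the edge from [par v] to [v],
    [owner v] the player acting at [v], [info v] the information set of [v]. *)
Record game := Game {
  node : finType;
  infoset : finType;
  action : finType;
  par : node -> option node;
  act : node -> action;
  owner : node -> player;
  info : node -> infoset }.

Section Game.
Variable G : game.
Local Notation V := (node G).
Local Notation I := (infoset G).
Local Notation A := (action G).
Local Notation par := (@par G).
Local Notation act := (@act G).
Local Notation owner := (@owner G).
Local Notation info := (@info G).

Definition children (u : V) : {set V} := [set w | par w == Some u].
Definition actset_node (u : V) : {set A} := [set act w | w in children u].
Definition internal (u : V) : bool := actset_node u != set0.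

Fixpoint up (n : nat) (v : V) : seq (V * A) :=
  match n with
  | 0 => [::]
  | n'.+1 => if par v is Some u then rcons (up n' u) (u, act v) else [::]
  end.
Definition hist (v : V) : seq (V * A) := up #|V| v.

Definition pathseq (i : player) (v : V) : seq (I * A) :=
  [seq (info x.1, x.2) | x <- [seq x <- hist v | owner x.1 == i]].

(** well-formedness: finite rooted tree, distinct action labels among
    siblings, information sets are owned by one player and share the action
    set, perfect recall for every (non-chance) player. *)
Definition wf_game : Prop :=
  [/\ (forall v : V, iter #|V| (obind par) (Some v) = None),
      (forall r r' : V, par r = None -> par r' = None -> r = r'),
      (forall w w' : V, par w = par w' -> par w <> None -> act w = act w' -> w = w'),
      (forall u u' : V, info u = info u' ->
          owner u = owner u' /\ actset_node u = actset_node u') &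
      (forall u u' : V, info u = info u' -> owner u <> Chance -> internal u ->
          pathseq (owner u) u = pathseq (owner u) u')].

Definition isInfo (i : player) (J : I) : bool :=
  [exists u, [&& info u == J, owner u == i & internal u]].
Definition rep (J : I) : option V := [pick u | info u == J].
Definition actset (J : I) : {set A} :=
  if rep J is Some u then actset_node u else set0.
(** the pairs of player i on the path to J (same for all nodes of J by perfect recall) *)
Definition seqI (i : player) (J : I) : seq (I * A) :=
  if rep J is Some u then pathseq i u else [::].
(** sigma(J): last pair of player i before J, or None (= the empty sequence) *)
Definition sigmaI (i : player) (J : I) : option (I * A) :=
  last None (map Some (seqI i J)).

(** sequences of player i: None is the empty sequence *)
Definition isSeq (i : player) (s : option (I * A)) : bool :=
  if s is Some (J, a) then isInfo i J && (a \in actset J) else true.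

Definition strict_anc (w v : V) : bool := w \in [seq x.1 | x <- hist v].
Definition connected (J1 J2 : I) : bool :=
  [exists v, exists w, [&& info v == J1, info w == J2 &
                          strict_anc w v || strict_anc v w]].
Definition relevant (s1 s2 : option (I * A)) : bool :=
  match s1, s2 with
  | Some (J1, _), Some (J2, _) => connected J1 J2
  | _, _ => true
  end.
Definition relevantI (s : option (I * A)) (J : I) : bool :=
  if s is Some (J1, _) then connected J1 J else true.

(** reduced-normal-form plans: partial maps infoset -> action *)
Definition plan := {ffun I -> option A}.
Definition reachable (i : player) (p : plan) (J : I) : bool :=
  [exists v, (info v == J) &&
     all (fun x => (owner x.1 != i) || (p (info x.1) == Some x.2)) (hist v)].
Definition isPlan (i : player) (p : plan) : bool :=
  [forall J, (p J != None) == (isInfo i J && reachable i p J)] &&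
  [forall J, if p J is Some a then a \in actset J else true].
Definition inPi (i : player) (s : option (I * A)) (p : plan) : bool :=
  isPlan i p &&
  (if s is Some (J, a) then
     all (fun x => p x.1 == Some x.2) (seqI i J) && (p J == Some a)
   else true).

Variable R : realType.

(** vectors indexed by (relevant) pairs of sequences *)
Definition corr := option (I * A) -> option (I * A) -> R.

Definition inVSF (xi : corr) : Prop :=
  [/\ (forall s1 s2, isSeq T1 s1 -> isSeq T2 s2 -> relevant s1 s2 -> 0 <= xi s1 s2),
      xi None None = 1,
      (forall (J : I) s2, isInfo T1 J -> isSeq T2 s2 -> relevantI s2 J ->
         \sum_(a in actset J) xi (Some (J, a)) s2 = xi (sigmaI T1 J) s2) &
      (forall (J : I) s1, isInfo T2 J -> isSeq T1 s1 -> relevantI s1 J ->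
         \sum_(b in actset J) xi s1 (Some (J, b)) = xi s1 (sigmaI T2 J))].

Definition inXi1 (xi : corr) : Prop :=
  inVSF xi /\ forall s2, isSeq T2 s2 -> xi None s2 = 0 \/ xi None s2 = 1.
Definition inXi2 (xi : corr) : Prop :=
  inVSF xi /\ forall s1, isSeq T1 s1 -> xi s1 None = 0 \/ xi s1 None = 1.

Definition isPlanDist (i : player) (mu : plan -> R) : Prop :=
  [/\ forall p, 0 <= mu p, \sum_p mu p = 1 & forall p, mu p != 0 -> isPlan i p].

Definition prodd (m1 m2 : plan -> R) : plan * plan -> R :=
  fun pp => m1 pp.1 * m2 pp.2.
Definition dirac (p : plan) : plan -> R := fun q => (q == p)%:R.

Definition fmap (mu : plan * plan -> R) : corr :=
  fun s1 s2 => \sum_(pp : plan * plan | inPi T1 s1 pp.1 && inPi T2 s2 pp.2) mu pp.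

End Game.

From HB Require Import structures.
From mathcomp Require Import all_boot all_order all_algebra.
From mathcomp Require Import reals.
Set Implicit Arguments. Unset Strict Implicit. Unset Printing Implicit Defensive.
Import Order.TTheory GRing.Theory Num.Theory.
Local Open Scope ring_scope.

Lemma sum_if_eq (R : pzSemiRingType) (T : finType) (P : pred T) (q : T) :
  \sum_(p | P p) (if p == q then 1 else 0 : R) = if P q then 1 else 0.
Proof.
case Pq: (P q); last by rewrite big1 // => p Pp; case: eqP => // E; rewrite E Pq in Pp.
by rewrite (bigD1 q) //= eqxx big1 ?addr0 // => p /andP [_ /negbTE ->].
Qed.

Lemma ler_sum_term (R : numDomainType) (T : finType) (P : pred T) (F : T -> R) t :
  P t -> (forall u, P u -> 0 <= F u) -> F t <= \sum_(u | P u) F u.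
Proof.
move=> Pt F_ge0; rewrite (bigD1 t) //= lerDl.
by apply: sumr_ge0 => u /andP [Pu _]; apply: F_ge0.
Qed.

Section GameTree.
Variable G : game.
Hypothesis wfG : wf_game G.
Local Notation V := (node G).
Local Notation I := (infoset G).
Local Notation A := (action G).
Local Notation par := (@par G).
Local Notation act := (@act G).
Local Notation owner := (@owner G).
Local Notation info := (@info G).
Implicit Types (J : I) (u v w : V).

Lemma up_stable n v : iter n (obind par) (Some v) = None ->
  forall m, (n <= m)%N -> up m v = up n v.
Proof.
elim: n v => [|n IH] v //= Hit [|m] //= Hnm.
rewrite -iterS iterSr /= in Hit.
case Hp: (par v) => [w|] //; rewrite Hp in Hit.
by rewrite (IH w Hit m Hnm).
Qed.

Lemma hist_par v w : par v = Some w -> hist v = rcons (hist w) (w, act v).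
Proof.
move=> Hp; case: wfG => Hit _ _ _ _.
have : (0 < #|V|)%N by apply/card_gt0P; exists v.
move: (Hit v); rewrite /hist; case: #|V| => [|n] // Hv _.
rewrite iterSr /= Hp in Hv.
by rewrite /= Hp -(up_stable Hv (leqnSn n)).
Qed.

Lemma hist_root v : par v = None -> hist v = [::].
Proof.
move=> Hp; have : (0 < #|V|)%N by apply/card_gt0P; exists v.
by rewrite /hist; case: #|V| => [|n] //= _; rewrite Hp.
Qed.

Lemma node_ind (P : V -> Prop) :
  (forall v, (forall w, par v = Some w -> P w) -> P v) -> forall v, P v.
Proof.
move=> H v; case: wfG => Hit _ _ _ _; move: (Hit v).
elim: #|V| v => [|n IH] v //= Hv.
by apply: H => w Hw; apply: IH; rewrite -iterS iterSr /= Hw in Hv.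
Qed.

Lemma pathseq_par i u w : par u = Some w ->
  pathseq i u = if owner w == i then rcons (pathseq i w) (info w, act u)
                else pathseq i w.
Proof.
move=> Hp; rewrite /pathseq (hist_par Hp) filter_rcons /=.
by case: (owner w == i); rewrite ?map_rcons.
Qed.

Lemma strict_anc_par x u w : par u = Some w ->
  strict_anc x u = (x == w) || strict_anc x w.
Proof. by move=> Hp; rewrite /strict_anc (hist_par Hp) map_rcons mem_rcons. Qed.

Lemma strict_anc_root x u : par u = None -> strict_anc x u = false.
Proof. by move=> Hp; rewrite /strict_anc (hist_root Hp). Qed.

Lemma strict_anc_trans x w v : strict_anc x w -> strict_anc w v -> strict_anc x v.
Proof.
move=> Hxw; elim/node_ind: v => v IH.
case Hp: (par v) => [p|]; last by rewrite strict_anc_root.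
rewrite !(strict_anc_par _ Hp) => /orP [/eqP<-|Hwp]; first by rewrite Hxw orbT.
by rewrite IH // orbT.
Qed.

Lemma strict_anc_total x v w : strict_anc x w -> strict_anc v w ->
  [\/ x = v, strict_anc x v | strict_anc v x].
Proof.
elim/node_ind: w => w IH.
case Hp: (par w) => [p|]; last by rewrite strict_anc_root.
rewrite !(strict_anc_par _ Hp) => /orP [/eqP->|Hx] /orP [/eqP->|Hv].
- exact: Or31.
- exact: Or33.
- exact: Or32.
- exact: IH Hx Hv.
Qed.

Lemma pathseq_last i u p z : pathseq i u = rcons p z ->
  exists x, [/\ owner x = i, info x = z.1, z.2 \in actset_node x,
               strict_anc x u & p = pathseq i x].
Proof.
elim/node_ind: u p z => u IH p z.
case Hp: (par u) => [w|]; last by rewrite /pathseq hist_root //; case: p.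
rewrite (pathseq_par _ Hp); case: eqP => Ho.
  move/rcons_inj => [<- <-]; exists w; split => //.
    by apply/imsetP; exists u; rewrite ?inE ?Hp.
  by rewrite (strict_anc_par _ Hp) eqxx.
move=> Hps; have [x [H1 H2 H3 H4 H5]] := IH w Hp p z Hps.
by exists x; split => //; rewrite (strict_anc_par _ Hp) H4 orbT.
Qed.

Lemma isInfo_node i J v : isInfo i J -> info v = J -> owner v = i /\ internal v.
Proof.
case/existsP => u /and3P [/eqP Hu /eqP Ho Hint] Hv.
case: wfG => _ _ _ Hinf _.
have [Ho' Ha] := Hinf u v (etrans Hu (esym Hv)).
by split; [rewrite -Ho' | rewrite /internal -Ha].
Qed.

Lemma rep_node i J : isInfo i J -> exists u, rep J = Some u /\ info u = J.
Proof.
case/existsP => u /and3P [/eqP Hu _ _].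
rewrite /rep; case: pickP => [x /eqP Hx|/(_ u)]; first by exists x.
by rewrite Hu eqxx.
Qed.

Lemma seqI_node i J v : i != Chance -> isInfo i J -> info v = J ->
  seqI i J = pathseq i v.
Proof.
move=> Hi HJ Hv; have [u [Hr Hu]] := rep_node HJ.
rewrite /seqI Hr; have [Ho Hint] := isInfo_node HJ Hu.
case: wfG => _ _ _ _ Hpr.
by have := Hpr u v (etrans Hu (esym Hv)); rewrite Ho; apply => //; apply/eqP.
Qed.

Lemma actset_node_eq J v : info v = J -> actset J = actset_node v.
Proof.
move=> Hv; rewrite /actset /rep; case: pickP => [x /eqP Hx|/(_ v)]; last first.
  by rewrite Hv eqxx.
case: wfG => _ _ _ Hinf _.
by have [_ ->] := Hinf x v (etrans Hx (esym Hv)).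
Qed.

Lemma actset_nonempty i J : isInfo i J -> exists a, a \in actset J.
Proof.
move=> HJ; have [u [_ Hu]] := rep_node HJ.
have [_ Hint] := isInfo_node HJ Hu.
by rewrite (actset_node_eq Hu); apply/set0Pn.
Qed.

Lemma sigma_rcons i J z : sigmaI i J = Some z -> exists p, seqI i J = rcons p z.
Proof.
rewrite /sigmaI; case/lastP: (seqI i J) => [|p z'] //.
by rewrite map_rcons last_rcons => [[->]]; exists p.
Qed.

Lemma seqI_rec i J : i != Chance -> isInfo i J ->
  (seqI i J = [::] /\ sigmaI i J = None) \/
  exists J' a', [/\ sigmaI i J = Some (J', a'), isInfo i J', a' \in actset J'
                  & seqI i J = rcons (seqI i J') (J', a')].
Proof.
move=> Hi HJ; have [u [_ Hu]] := rep_node HJ.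
have Hs := seqI_node Hi HJ Hu.
rewrite /sigmaI; case/lastP E: (seqI i J) Hs => [|p [J' a']] Hs; first by left.
right; have [x [Ho /= Hx Ha _ Hp]] := pathseq_last (esym Hs); subst J'.
have HI : isInfo i (info x).
  apply/existsP; exists x; rewrite eqxx Ho eqxx /internal /=.
  by apply/set0Pn; exists a'.
exists (info x), a'; split => //.
- by rewrite map_rcons last_rcons.
- by rewrite (actset_node_eq (erefl _)).
- by rewrite (seqI_node Hi HI (erefl _)) Hp.
Qed.

Lemma seq_ind i (P : option (I * A) -> Prop) : i != Chance -> P None ->
  (forall J a, isInfo i J -> a \in actset J -> P (sigmaI i J) -> P (Some (J, a))) ->
  forall s, isSeq i s -> P s.
Proof.
move=> Hi P0 PS.
suff Psigma : forall n J, (size (seqI i J) < n)%N -> isInfo i J -> P (sigmaI i J).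
  case => [[J a]|] //= /andP [HJ Ha].
  by apply: PS => //; apply: (Psigma _ J (ltnSn _)).
elim => // n IH J Hn HJ.
case: (seqI_rec Hi HJ) => [[_ ->] //|[J' [a' [-> HJ' Ha' E]]]].
by apply: PS => //; apply: IH => //; rewrite E size_rcons ltnS in Hn.
Qed.

Lemma connected_sigma i j J J2 J' a' : i != Chance -> i != j ->
  isInfo i J -> isInfo j J2 -> sigmaI i J = Some (J', a') ->
  connected J J2 -> connected J' J2.
Proof.
move=> Hi Hij HJ HJ2 Hs.
case/existsP => w /existsP [v /and3P [/eqP Hw /eqP Hv Hanc]].
have [p Ep] := sigma_rcons Hs; rewrite (seqI_node Hi HJ Hw) in Ep.
have [x [Ho Hx _ Hxw _]] := pathseq_last Ep.
have [Hov _] := isInfo_node HJ2 Hv.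
apply/existsP; exists x; apply/existsP; exists v; rewrite Hx Hv !eqxx /=.
case/orP: Hanc => Ha; last by rewrite (strict_anc_trans Hxw Ha) orbT.
case: (strict_anc_total Hxw Ha) => [Exv|->|->]; rewrite ?orbT //.
by move: Hij; rewrite -Ho -Hov Exv eqxx.
Qed.

Lemma connected_sym J1 J2 : connected J1 J2 = connected J2 J1.
Proof.
by apply/existsP/existsP => -[v /existsP [w /and3P [H1 H2 H3]]];
  exists w; apply/existsP; exists v; rewrite H1 H2 orbC.
Qed.

Lemma relevant_Some_l J a t : relevant (Some (J, a)) t = relevantI t J.
Proof. by case: t => [[J2 b]|] //=; rewrite connected_sym. Qed.

Lemma relevant_Some_r s J b : relevant s (Some (J, b)) = relevantI s J.
Proof. by case: s => [[]|]. Qed.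

Lemma relevant_sym (s t : option (I * A)) : relevant s t = relevant t s.
Proof. by case: s t => [[? ?]|] [[? ?]|] //=; rewrite connected_sym. Qed.

Lemma relevant_sigma i j J a t : i != Chance -> i != j -> isInfo i J -> isSeq j t ->
  relevant (Some (J, a)) t -> relevant (sigmaI i J) t.
Proof.
move=> Hi Hij HJ; case: t => [[J2 b]|] /=; last by case: (sigmaI i J) => [[]|].
case/andP=> HJ2 _ Hc; case Es: (sigmaI i J) => [[J' a']|] //=.
exact: (connected_sigma Hi Hij HJ HJ2 Es Hc).
Qed.

Lemma reach_all i J (p : plan G) : i != Chance -> isInfo i J ->
  reachable i p J = all (fun x => p x.1 == Some x.2) (seqI i J).
Proof.
move=> Hi HJ.
have path_all v : all (fun x => (owner x.1 != i) || (p (info x.1) == Some x.2)) (hist v)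
     = all (fun x => p x.1 == Some x.2) (pathseq i v).
  by rewrite /pathseq all_map all_filter; apply: eq_all => x /=; case: (owner x.1 == i).
apply/existsP/idP => [[v /andP [/eqP Hv]]|H].
  by rewrite path_all (seqI_node Hi HJ Hv).
have [u [_ Hu]] := rep_node HJ.
by exists u; rewrite Hu eqxx path_all -(seqI_node Hi HJ Hu).
Qed.

Lemma plan_def i (p : plan G) J : isPlan i p ->
  (p J != None) = isInfo i J && reachable i p J.
Proof. by case/andP => /forallP /(_ J) /eqP. Qed.

Lemma plan_some i (p : plan G) J a : isPlan i p -> p J = Some a ->
  [/\ isInfo i J, a \in actset J & reachable i p J].
Proof.
move=> Hp E; have := plan_def J Hp; rewrite E => /esym/andP [HJ HR].
by split => //; case/andP: Hp => _ /forallP /(_ J); rewrite E.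
Qed.

Lemma inPi_info i J a (p : plan G) : i != Chance -> isInfo i J -> isPlan i p ->
  inPi i (Some (J, a)) p = (p J == Some a).
Proof.
move=> Hi HJ Hp; rewrite /inPi Hp /=.
case E: (p J == Some a); last by rewrite andbF.
by have [_ _] := plan_some Hp (eqP E); rewrite (reach_all _ Hi HJ) => ->.
Qed.

Lemma inPi_sigma i (p : plan G) J : i != Chance -> isPlan i p -> isInfo i J ->
  inPi i (sigmaI i J) p = (p J != None).
Proof.
move=> Hi Hp HJ; rewrite (plan_def J Hp) HJ /= (reach_all _ Hi HJ).
case: (seqI_rec Hi HJ) => [[-> ->]|[J' [a' [-> HJ' Ha' ->]]]].
  by rewrite /inPi Hp.
rewrite all_rcons /= (inPi_info _ Hi HJ' Hp).
case E: (p J' == Some a') => //=.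
by have [_ _] := plan_some Hp (eqP E); rewrite (reach_all _ Hi HJ').
Qed.

Definition plan_of i (c : I -> option A) : plan G :=
  [ffun J => if isInfo i J && all (fun x => c x.1 == Some x.2) (seqI i J)
             then c J else None].

Lemma plan_of_all i c J : i != Chance -> isInfo i J ->
  all (fun x => plan_of i c x.1 == Some x.2) (seqI i J) =
  all (fun x => c x.1 == Some x.2) (seqI i J).
Proof.
move=> Hi; have [n] := ubnP (size (seqI i J)); elim: n J => // n IH J Hn HJ.
case: (seqI_rec Hi HJ) => [[-> _] //|[J' [a' [_ HJ' Ha' E]]]].
rewrite E !all_rcons /= ffunE HJ' /= IH //; last by rewrite E size_rcons ltnS in Hn.
by case: (all _ _); rewrite ?andbF.
Qed.

Lemma plan_of_plan i c : i != Chance ->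
  (forall J, isInfo i J -> exists2 a, c J = Some a & a \in actset J) ->
  isPlan i (plan_of i c).
Proof.
move=> Hi Hc; apply/andP; split; apply/forallP => J; rewrite ffunE.
  case HJ: (isInfo i J) => //=.
  rewrite (reach_all _ Hi HJ) plan_of_all //.
  by case: (all _ _) => //=; have [a -> _] := Hc J HJ.
by case: ifP => // /andP [HJ _]; have [a -> Ha] := Hc J HJ.
Qed.

Lemma plan_of_some i c J a : plan_of i c J = Some a -> c J = Some a.
Proof. by rewrite ffunE; case: ifP. Qed.

Variable R : realType.
Implicit Types r d : option (I * A) -> R.

Definition nonneg i r := forall s, isSeq i s -> 0 <= r s.

(** [r] satisfies the sequence-form flow constraints of player [i] at all of
    its information sets; with [nonneg], [r] is an unnormalised realization plan. *)
Definition conserves i r :=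
  forall J, isInfo i J -> \sum_(a in actset J) r (Some (J, a)) = r (sigmaI i J).

Definition realize i (p : plan G) : option (I * A) -> R :=
  fun s => if inPi i s p then 1 else 0.

Definition support i r : {set option (I * A)} := [set s | isSeq i s & r s != 0].

Lemma realize_None i p : isPlan i p -> realize i p None = 1.
Proof. by rewrite /realize /inPi => ->. Qed.

(** The realization vector of a plan satisfies the flow constraints: at [J]
    it plays exactly one action iff it plays sigma(J). *)
Lemma realize_conserves i p : i != Chance -> isPlan i p -> conserves i (realize i p).
Proof.
move=> Hi Hp J HJ; rewrite /realize (inPi_sigma Hi Hp HJ).
under eq_bigr => a _ do rewrite (inPi_info _ Hi HJ Hp).
case E: (p J) => [a0|] /=; last by rewrite big1.
have [_ Ha0 _] := plan_some Hp E.
rewrite (bigD1 a0) //= eqxx big1 ?addr0 // => a /andP [_ Ha].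
by case: eqP => // -[Ea]; rewrite Ea eqxx in Ha.
Qed.

Lemma conserves_sub i r1 r2 c : conserves i r1 -> conserves i r2 ->
  conserves i (fun s => r1 s - c * r2 s).
Proof. by move=> H1 H2 J HJ; rewrite sumrB -mulr_sumr H1 // H2. Qed.

Lemma realization_le_None i r s : i != Chance -> nonneg i r -> conserves i r ->
  isSeq i s -> r s <= r None.
Proof.
move=> Hi r_ge0 r_cons; move: s; apply: seq_ind => // J a HJ Ha.
apply: le_trans; rewrite -r_cons //; apply: ler_sum_term => // b Hb.
by apply: r_ge0; rewrite /= HJ.
Qed.

Lemma realization_zero i r s : i != Chance -> nonneg i r -> conserves i r ->
  r None = 0 -> isSeq i s -> r s = 0.
Proof.
move=> Hi r_ge0 r_cons r0 Hs; apply/le_anti.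
by rewrite r_ge0 // andbT -r0 (realization_le_None Hi r_ge0 r_cons Hs).
Qed.

(** A realization plan of positive mass admits a plan all of whose sequences
    carry positive mass: at each information set choose a positive action. *)
Lemma positive_plan i r : i != Chance -> nonneg i r -> conserves i r -> 0 < r None ->
  exists2 q, isPlan i q & forall s, isSeq i s -> inPi i s q -> 0 < r s.
Proof.
move=> Hi r_ge0 r_cons r_pos.
pose c J := if [pick a in actset J | 0 < r (Some (J, a))] is Some a then Some a
            else [pick a in actset J].
have c_act J : isInfo i J -> exists2 a, c J = Some a & a \in actset J.
  move=> HJ; rewrite /c; case: pickP => [a /andP [Ha _]|_]; first by exists a.
  case: pickP => [a Ha|]; first by exists a.
  by have [a Ha] := actset_nonempty HJ => /(_ a); rewrite Ha.
have c_pos J : isInfo i J -> 0 < r (sigmaI i J) ->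
    exists a, c J = Some a /\ 0 < r (Some (J, a)).
  move=> HJ Hpos; rewrite /c; case: pickP => [a /andP [_ Hra]|Hno]; first by exists a.
  suff : r (sigmaI i J) = 0 by move=> E; rewrite E ltxx in Hpos.
  rewrite -r_cons //; apply: big1 => a Ha; apply/le_anti.
  have -> : 0 <= r (Some (J, a)) by apply: r_ge0; rewrite /= HJ.
  by rewrite andbT leNgt; move: (Hno a); rewrite Ha => /negbT.
have Hq : isPlan i (plan_of i c) by apply: plan_of_plan.
exists (plan_of i c) => //; apply: seq_ind => // J a HJ Ha IH.
rewrite (inPi_info _ Hi HJ Hq) => /eqP Eq.
have Hsigma : inPi i (sigmaI i J) (plan_of i c) by rewrite (inPi_sigma Hi Hq HJ) Eq.
have [a0 [Ec Hr]] := c_pos J HJ (IH Hsigma).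
by move: (plan_of_some Eq); rewrite Ec => -[<-].
Qed.

(** Peeling step: subtracting [lam] times a positive plan [q], with [lam] the
    least mass on a sequence of [q], keeps a realization plan and strictly
    shrinks its support. *)
Lemma peel_plan i r : i != Chance -> nonneg i r -> conserves i r -> 0 < r None ->
  exists q lam, [/\ isPlan i q, 0 < lam,
    nonneg i (fun s => r s - lam * realize i q s) &
    support i (fun s => r s - lam * realize i q s) \proper support i r].
Proof.
move=> Hi r_ge0 r_cons r_pos.
have [q Hq q_pos] := positive_plan Hi r_ge0 r_cons r_pos.
pose Pq : pred (option (I * A)) := fun s => isSeq i s && inPi i s q.
have P0 : Pq None by rewrite /Pq /inPi Hq.
have [s0 /andP [Hs0 Hq0] s0_min] := Order.TotalTheory.arg_minP r P0.
exists q, (r s0); split => //; first exact: q_pos.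
  move=> s Hs; rewrite /realize; case: ifP => Es; last by rewrite mulr0 subr0 r_ge0.
  by rewrite mulr1 subr_ge0; apply: s0_min; rewrite /Pq Hs Es.
apply/properP; split.
  apply/subsetP => s; rewrite !inE => /andP [Hs]; rewrite Hs /realize.
  case: ifP => [Es _|_]; last by rewrite mulr0 subr0.
  by rewrite gt_eqF // q_pos.
exists s0; first by rewrite inE Hs0 gt_eqF // q_pos.
by rewrite inE /realize Hq0 mulr1 subrr eqxx andbF.
Qed.

Lemma kuhn i r : i != Chance -> nonneg i r -> conserves i r ->
  exists mu : plan G -> R, [/\ forall p, 0 <= mu p, forall p, mu p != 0 -> isPlan i p &
     forall s, isSeq i s -> \sum_(p | inPi i s p) mu p = r s].
Proof.
move=> Hi; have [n] := ubnP #|support i r|; elim: n r => // n IH r Hn r_ge0 r_cons.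
have [r0|r_neq0] := eqVneq (r None) 0.
  exists (fun=> 0); split=> // [p|s Hs]; first by rewrite eqxx.
  by rewrite big1 // (realization_zero Hi r_ge0 r_cons r0 Hs).
have r_pos : 0 < r None by rewrite lt0r r_neq0 r_ge0.
have [q [lam [Hq lam_pos r'_ge0 r'_supp]]] := peel_plan Hi r_ge0 r_cons r_pos.
have r'_cons := conserves_sub lam r_cons (realize_conserves Hi Hq).
pose r' s := r s - lam * realize i q s.
have Hn' : (#|support i r'| < n)%N.
  by rewrite -ltnS (leq_trans _ Hn) // ltnS proper_card.
have [mu' [mu'_ge0 mu'_plan mu'_real]] := IH _ Hn' r'_ge0 r'_cons.
exists (fun p => mu' p + lam * (if p == q then 1 else 0)); split.
- move=> p; apply: addr_ge0 => //.
  by apply: mulr_ge0; [exact: ltW | case: (p == q)].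
- by move=> p; case: (eqVneq p q) => [-> //|_]; rewrite mulr0 addr0; apply: mu'_plan.
- move=> s Hs; rewrite big_split /= mu'_real // -mulr_sumr sum_if_eq.
  by rewrite /r' /realize subrK.
Qed.

(** A 0/1-valued realization plan of mass one is the realization of a single
    plan: subtracting a positive plan leaves a realization plan of mass zero. *)
Lemma pure_realization i d : i != Chance -> d None = 1 ->
  (forall s, isSeq i s -> d s = 0 \/ d s = 1) -> conserves i d ->
  exists2 p, isPlan i p & forall s, isSeq i s -> d s = realize i p s.
Proof.
move=> Hi d1 d01 d_cons.
have d_ge0 : nonneg i d by move=> s /d01 [] ->.
have d_pos : 0 < d None by rewrite d1 ltr01.
have [q Hq q_pos] := positive_plan Hi d_ge0 d_cons d_pos.
pose e s := d s - 1 * realize i q s.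
have e_ge0 : nonneg i e.
  move=> s Hs; rewrite /e /realize mul1r; case: ifP => Es; last by rewrite subr0 d_ge0.
  by case: (d01 s Hs) (q_pos s Hs Es) => ->; rewrite ?ltxx // subrr.
have e_cons := conserves_sub 1 d_cons (realize_conserves Hi Hq).
have e0 : e None = 0 by rewrite /e realize_None // d1 mul1r subrr.
exists q => // s Hs; apply/eqP; rewrite -subr_eq0 -[realize i q s]mul1r.
exact/eqP/(realization_zero Hi e_ge0 e_cons e0 Hs).
Qed.

Lemma mass_on_plans i (mu : plan G -> R) : (forall p, mu p != 0 -> isPlan i p) ->
  \sum_p mu p = \sum_(p | inPi i None p) mu p.
Proof.
move=> mu_plan; rewrite [RHS]big_mkcond; apply: eq_bigr => p _ /=.
rewrite /inPi andbT; case: ifP => // Hp.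
by apply/eqP; apply: contraFT Hp => /mu_plan.
Qed.

Section Factorization.
Variables (i j : player) (x : option (I * A) -> option (I * A) -> R) (p : plan G).
Hypotheses (Hi : i != Chance) (Hj : j != Chance) (Hij : i != j) (Hp : isPlan j p).
Hypothesis x_ge0 : forall s t, isSeq i s -> isSeq j t -> relevant s t -> 0 <= x s t.
Hypothesis x_row : forall J t, isInfo i J -> isSeq j t -> relevantI t J ->
  \sum_(a in actset J) x (Some (J, a)) t = x (sigmaI i J) t.
Hypothesis x_col : forall J s, isInfo j J -> isSeq i s -> relevantI s J ->
  \sum_(b in actset J) x s (Some (J, b)) = x s (sigmaI j J).
Hypothesis x_marginal : forall t, isSeq j t -> x None t = realize j p t.

(** The column of a sequence not played by [p] vanishes: its entries are
    dominated along the rows by the marginal entry, which is 0. *)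
Lemma column_unplayed s t : isSeq i s -> isSeq j t -> relevant s t ->
  ~~ inPi j t p -> x s t = 0.
Proof.
move=> + Ht + Hnp; move: s; apply: (seq_ind Hi) => [_|J a HJ Ha IH Hr].
  by rewrite x_marginal // /realize (negbTE Hnp).
have HrJ : relevantI t J by rewrite -(relevant_Some_l _ a).
apply/le_anti; rewrite x_ge0 ?andbT /= ?HJ //.
rewrite -(IH (relevant_sigma Hi Hij HJ Ht Hr)) -x_row //.
apply: ler_sum_term => // a' Ha'.
by apply: x_ge0; rewrite /= ?HJ ?relevant_Some_l.
Qed.

(** The column of a sequence played by [p] equals the [i]-marginal: at each
    information set of [j] the other columns vanish. *)
Lemma column_played s t : isSeq i s -> isSeq j t -> relevant s t ->
  inPi j t p -> x s t = x s None.
Proof.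
move=> Hs; move: t; apply: (seq_ind Hj) => // J b HJ Hb IH Hr.
rewrite (inPi_info _ Hj HJ Hp) => /eqP pJ.
have Hsigma : inPi j (sigmaI j J) p by rewrite (inPi_sigma Hj Hp HJ) pJ.
have Hrs : relevant s (sigmaI j J).
  have Hji : j != i by rewrite eq_sym.
  by rewrite relevant_sym (relevant_sigma (a := b) Hj Hji HJ Hs) // relevant_sym.
have HsJ : relevantI s J by rewrite -(relevant_Some_r _ _ b).
rewrite -(IH Hrs Hsigma) -x_col // (bigD1 b) //= big1 ?addr0 // => b' /andP [Hb' Hne].
apply: column_unplayed; rewrite /= ?HJ ?relevant_Some_r //.
by rewrite (inPi_info _ Hj HJ Hp) pJ (inj_eq Some_inj) eq_sym.
Qed.

Lemma factorization : exists2 mu, isPlanDist i mu &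
  forall s t, isSeq i s -> isSeq j t -> relevant s t ->
    x s t = (\sum_(q | inPi i s q) mu q) * realize j p t.
Proof.
have row_ge0 : nonneg i (x^~ None).
  by move=> s Hs; apply: x_ge0 => //; case: s {Hs} => [[]|].
have row_cons : conserves i (x^~ None) by move=> J HJ; apply: x_row.
have [mu [mu_ge0 mu_plan mu_real]] := kuhn Hi row_ge0 row_cons.
exists mu.
  by split => //; rewrite (mass_on_plans mu_plan) mu_real // x_marginal // realize_None.
move=> s t Hs Ht Hr; rewrite mu_real // /realize.
case: ifP => Htp; rewrite ?mulr1 ?mulr0; first exact: column_played.
by apply: column_unplayed => //; rewrite Htp.
Qed.

End Factorization.
End GameTree.

Lemma fmap_dirac_r (R : realType) (G : game) (mu : plan G -> R) (p : plan G) s1 s2 :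
  fmap (prodd mu (dirac R p)) s1 s2 =
  (\sum_(q | inPi T1 s1 q) mu q) * realize R T2 p s2.
Proof.
rewrite /fmap /prodd /dirac.
rewrite -(pair_big (inPi T1 s1) (inPi T2 s2) (fun a b => mu a * (b == p)%:R)) /=.
rewrite mulr_suml; apply: eq_bigr => q _; rewrite -mulr_sumr /realize -sum_if_eq.
by congr (_ * _); apply: eq_bigr => b _; case: eqP.
Qed.

Lemma fmap_dirac_l (R : realType) (G : game) (mu : plan G -> R) (p : plan G) s1 s2 :
  fmap (prodd (dirac R p) mu) s1 s2 =
  (\sum_(q | inPi T2 s2 q) mu q) * realize R T1 p s1.
Proof.
rewrite /fmap /prodd /dirac.
rewrite -(pair_big (inPi T1 s1) (inPi T2 s2) (fun a b => (a == p)%:R * mu b)) /=.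
under eq_bigr => q _ do rewrite -mulr_sumr.
rewrite -mulr_suml mulrC /realize -sum_if_eq.
by congr (_ * _); apply: eq_bigr => b _; case: eqP.
Qed.

Theorem mainTheorem6 (R : realType) (G : game) :
  wf_game G ->
  (forall xi : corr G R, inXi1 xi ->
     exists (mu1 : plan G -> R) (p2 : plan G),
       [/\ isPlanDist T1 mu1, isPlan T2 p2,
           (forall s1 s2, isSeq T1 s1 -> isSeq T2 s2 -> relevant s1 s2 ->
              xi s1 s2 = fmap (prodd mu1 (dirac R p2)) s1 s2) &
           (forall s2, isSeq T2 s2 ->
              xi None s2 = if inPi T2 s2 p2 then 1 else 0)]) /\
  (forall xi : corr G R, inXi2 xi ->
     exists (p1 : plan G) (mu2 : plan G -> R),
       [/\ isPlan T1 p1, isPlanDist T2 mu2 &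
           (forall s1 s2, isSeq T1 s1 -> isSeq T2 s2 -> relevant s1 s2 ->
              xi s1 s2 = fmap (prodd (dirac R p1) mu2) s1 s2)]).
Proof.
move=> wfG; split=> xi [[xi_ge0 xi_root xi_row xi_col] xi_pure].
- (* the T2-marginal is a single plan p2; factor xi through it *)
  have [p2 Hp2 p2_real] := pure_realization wfG (i := T2) (d := xi None) isT xi_root xi_pure
    (fun J HJ => xi_col J None HJ isT isT).
  have [mu1 Hmu1 xi_prod] :=
    factorization wfG (i := T1) (j := T2) isT isT isT Hp2 xi_ge0 xi_row xi_col p2_real.
  exists mu1, p2; split => // s1 s2 H1 H2 Hr.
  by rewrite xi_prod // fmap_dirac_r.
- (* the same argument applied to the transpose of xi *)
  have [p1 Hp1 p1_real] := pure_realization wfG (i := T1) (d := xi^~ None) isT xi_root xi_pure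
    (fun J HJ => xi_row J None HJ isT isT).
  have xiT_ge0 s t : isSeq T2 s -> isSeq T1 t -> relevant s t -> 0 <= xi t s.
    by move=> Hs Ht Hr; apply: xi_ge0 => //; rewrite relevant_sym.
  have [mu2 Hmu2 xi_prod] := factorization (i := T2) (j := T1) (x := fun s t => xi t s)
    wfG isT isT isT Hp1 xiT_ge0 xi_col xi_row p1_real.
  exists p1, mu2; split => // s1 s2 H1 H2 Hr.
  by rewrite xi_prod // ?fmap_dirac_l // relevant_sym.
Qed.
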